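(* Let $1\le p\ne q<\infty$. No operators $T\in B(\ell^p)$ and $S\in B(\ell^q)$ are equivalent after one-sided extension.
   Context: $\ell^p=\ell^p(\mathbb N)$ over $\mathbb C$; $B(X,Y)$ denotes bounded linear operators; invertibility means bounded inverse; $X\oplus Y$ is the $\ell^2$-direct sum and $\mathrm{id}_X$ the identity. Operators $T\in B(X)$ and $S\in B(Y)$ are equivalent after extension if there exist Banach spaces $X'$, $Y'$ and invertible $E\in B(Y\oplus Y',X\oplus X')$, $F\in B(X\oplus X',Y\oplus Y')$ with $\begin{bmatrix}T&0\\0&\mathrm{id}_{X'}\end{bmatrix}=E\begin{bmatrix}S&0\\0&\mathrm{id}_{Y'}\end{bmatrix}F$. They are equivalent after one-sided extension if this holds with one of $X'$ or $Y'$ equal to the trivial space $\{0\}$. *)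

From Stdlib Require Import Reals ClassicalEpsilon.
Open Scope R_scope.

Definition Cx : Type := (R * R)%type.
Definition C0 : Cx := (0, 0).
Definition C1 : Cx := (1, 0).
Definition Cadd (a b : Cx) : Cx := (fst a + fst b, snd a + snd b).
Definition Copp (a : Cx) : Cx := (- fst a, - snd a).
Definition Cmul (a b : Cx) : Cx :=
  (fst a * fst b - snd a * snd b, fst a * snd b + snd a * fst b).
Definition Cmod (a : Cx) : R := sqrt (fst a * fst a + snd a * snd a).

Record Banach : Type := {
  bcar :> Type;
  bzero : bcar;
  badd : bcar -> bcar -> bcar;
  bopp : bcar -> bcar;
  bscal : Cx -> bcar -> bcar;
  bnorm : bcar -> R;
  badd_assoc : forall x y z, badd x (badd y z) = badd (badd x y) z;
  badd_comm : forall x y, badd x y = badd y x;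
  badd_zero : forall x, badd x bzero = x;
  badd_opp : forall x, badd x (bopp x) = bzero;
  bscal_one : forall x, bscal C1 x = x;
  bscal_mul : forall a b x, bscal a (bscal b x) = bscal (Cmul a b) x;
  bscal_addv : forall a x y, bscal a (badd x y) = badd (bscal a x) (bscal a y);
  bscal_adds : forall a b x, bscal (Cadd a b) x = badd (bscal a x) (bscal b x);
  bnorm_nonneg : forall x, 0 <= bnorm x;
  bnorm_zero : forall x, bnorm x = 0 -> x = bzero;
  bnorm_scal : forall a x, bnorm (bscal a x) = Cmod a * bnorm x;
  bnorm_triangle : forall x y, bnorm (badd x y) <= bnorm x + bnorm y;
  bcomplete : forall u : nat -> bcar,
    (forall eps, eps > 0 -> exists N, forall m n, (m >= N)%nat -> (n >= N)%nat ->
        bnorm (badd (u m) (bopp (u n))) < eps) ->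
    exists l, forall eps, eps > 0 -> exists N, forall n, (n >= N)%nat ->
        bnorm (badd (u n) (bopp l)) < eps
}.

Definition trivial_space (X : Banach) : Prop := forall x : X, x = bzero X.

(** * Normed subspaces of a vector space: a carrier with total operations,
    a domain predicate (the actual space) and a norm. *)
Record NSpace : Type := {
  ncar : Type;
  ndom : ncar -> Prop;
  nadd : ncar -> ncar -> ncar;
  nscal : Cx -> ncar -> ncar;
  nnorm : ncar -> R
}.

Definition NS_of_Banach (X : Banach) : NSpace :=
  {| ncar := bcar X; ndom := fun _ => True; nadd := badd X;
     nscal := bscal X; nnorm := bnorm X |}.

Definition NSsum (X Y : NSpace) : NSpace :=
  {| ncar := (ncar X * ncar Y)%type;
     ndom := fun z => ndom X (fst z) /\ ndom Y (snd z);
     nadd := fun z w => (nadd X (fst z) (fst w), nadd Y (snd z) (snd w));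
     nscal := fun a z => (nscal X a (fst z), nscal Y a (snd z));
     nnorm := fun z => sqrt (nnorm X (fst z) ^ 2 + nnorm Y (snd z) ^ 2) |}.

Definition rpow (x y : R) : R := if Rlt_dec 0 x then Rpower x y else 0.

Definition lp_member (p : R) (x : nat -> Cx) : Prop :=
  exists l, Un_cv (fun N => sum_f_R0 (fun n => rpow (Cmod (x n)) p) N) l.

Definition lp_sum (p : R) (x : nat -> Cx) : R :=
  epsilon (inhabits 0)
    (fun l => Un_cv (fun N => sum_f_R0 (fun n => rpow (Cmod (x n)) p) N) l).

Definition lp_norm (p : R) (x : nat -> Cx) : R := rpow (lp_sum p x) (/ p).

Definition lp (p : R) : NSpace :=
  {| ncar := nat -> Cx;
     ndom := lp_member p;
     nadd := fun x y n => Cadd (x n) (y n);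
     nscal := fun a x n => Cmul a (x n);
     nnorm := lp_norm p |}.

Definition bounded_op (X Y : NSpace) (f : ncar X -> ncar Y) : Prop :=
  (forall x, ndom X x -> ndom Y (f x)) /\
  (forall x y, ndom X x -> ndom X y -> f (nadd X x y) = nadd Y (f x) (f y)) /\
  (forall a x, ndom X x -> f (nscal X a x) = nscal Y a (f x)) /\
  (exists M, forall x, ndom X x -> nnorm Y (f x) <= M * nnorm X x).

Definition invertible_op (X Y : NSpace) (f : ncar X -> ncar Y) : Prop :=
  bounded_op X Y f /\
  exists g : ncar Y -> ncar X, bounded_op Y X g /\
    (forall x, ndom X x -> g (f x) = x) /\
    (forall y, ndom Y y -> f (g y) = y).

Definition ext_op (X : NSpace) (X' : Banach) (T : ncar X -> ncar X)
  : ncar (NSsum X (NS_of_Banach X')) -> ncar (NSsum X (NS_of_Banach X')) :=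
  fun z => (T (fst z), snd z).

Definition equiv_after_ext_with (X Y : NSpace) (T : ncar X -> ncar X)
  (S : ncar Y -> ncar Y) (X' Y' : Banach) : Prop :=
  exists (E : ncar (NSsum Y (NS_of_Banach Y')) -> ncar (NSsum X (NS_of_Banach X')))
         (F : ncar (NSsum X (NS_of_Banach X')) -> ncar (NSsum Y (NS_of_Banach Y'))),
    invertible_op (NSsum Y (NS_of_Banach Y')) (NSsum X (NS_of_Banach X')) E /\
    invertible_op (NSsum X (NS_of_Banach X')) (NSsum Y (NS_of_Banach Y')) F /\
    (forall z, ndom (NSsum X (NS_of_Banach X')) z ->
       ext_op X X' T z = E (ext_op Y Y' S (F z))).

Definition equiv_after_one_sided_ext (X Y : NSpace) (T : ncar X -> ncar X)
  (S : ncar Y -> ncar Y) : Prop :=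
  exists X' Y' : Banach, (trivial_space X' \/ trivial_space Y') /\
    equiv_after_ext_with X Y T S X' Y'.

(** An invertible operator from [lp p (+) {0}] onto [lp q (+) Y'] (or the reverse)
    restricts to an isomorphic embedding of one of [lp p], [lp q] into the other, so it
    suffices that [lp r] embeds isomorphically into [lp s] only when [r = s].
    Given such a [J], a pigeonhole argument yields pairs [a_i < b_i] for which the
    vectors [J (e_(a_i) - e_(b_i))] live, up to any prescribed error, on consecutive
    disjoint blocks of coordinates, with [||.||_s^s] bounded above and below. The sum
    [x_N] of the first [N] differences has [||x_N||_r^r = 2N] while [||J x_N||_s^s] is
    comparable to [N]; hence [N^(1/r)] and [N^(1/s)] are comparable for all [N], which
    forces [r = s]. *)

From Pilot Require Import Defs.
From Stdlib Require Import Reals Lra Lia Psatz ZArith.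
From Stdlib Require Import Classical ClassicalEpsilon FunctionalExtensionality.
Open Scope R_scope.

Lemma rpow_nonneg x y : 0 <= rpow x y.
Proof. unfold rpow; destruct (Rlt_dec 0 x); [left; apply exp_pos | lra]. Qed.

Lemma rpow_0 y : rpow 0 y = 0.
Proof. unfold rpow; destruct (Rlt_dec 0 0); lra. Qed.

Lemma rpow_pos x y : 0 < x -> rpow x y = Rpower x y.
Proof. intro h; unfold rpow; destruct (Rlt_dec 0 x); [reflexivity | lra]. Qed.

Lemma rpow_gt0 x y : 0 < x -> 0 < rpow x y.
Proof. intro h; rewrite rpow_pos by exact h; apply exp_pos. Qed.

Lemma rpow_1 e : rpow 1 e = 1.
Proof. rewrite rpow_pos by lra. unfold Rpower. rewrite ln_1, Rmult_0_r, exp_0. reflexivity. Qed.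

Lemma rpow_le x y e : 0 < e -> 0 <= x <= y -> rpow x e <= rpow y e.
Proof.
  intros he [[hx | <-] hxy].
  - rewrite !rpow_pos by lra. apply Rle_Rpower_l; lra.
  - rewrite rpow_0. apply rpow_nonneg.
Qed.

Lemma rpow_lt x y e : 0 < e -> 0 <= x < y -> rpow x e < rpow y e.
Proof.
  intros he [[hx | <-] hxy].
  - rewrite !rpow_pos by lra. apply Rlt_Rpower_l; lra.
  - rewrite rpow_0. apply rpow_gt0. exact hxy.
Qed.

Lemma rpow_le_inv x y e : 0 < e -> 0 <= y -> rpow x e <= rpow y e -> x <= y.
Proof.
  intros he hy h. destruct (Rle_dec x y) as [| hxy]; [assumption |].
  assert (rpow y e < rpow x e) by (apply rpow_lt; lra). lra.
Qed.

Lemma rpow_mult x y e : 0 <= x -> 0 <= y -> rpow (x * y) e = rpow x e * rpow y e.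
Proof.
  intros [hx | <-] [hy | <-];
    try (rewrite ?Rmult_0_l, ?Rmult_0_r, !rpow_0; ring).
  rewrite !rpow_pos by nra. symmetry. apply Rpower_mult_distr; assumption.
Qed.

Lemma rpow_plus x a b : 0 < x -> rpow x (a + b) = rpow x a * rpow x b.
Proof. intro h; rewrite !rpow_pos by exact h; apply Rpower_plus. Qed.

Lemma rpow_inv_r x e : 0 < e -> 0 <= x -> rpow (rpow x (/ e)) e = x.
Proof.
  intros he [hx | <-]; [| rewrite !rpow_0; reflexivity].
  rewrite (rpow_pos x) by exact hx. rewrite rpow_pos by apply exp_pos.
  rewrite Rpower_mult, Rinv_l by lra. apply Rpower_1. exact hx.
Qed.

Lemma rpow_ge1 x e : 1 <= x -> 0 <= e -> 1 <= rpow x e.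
Proof.
  intros hx he. rewrite rpow_pos by lra.
  rewrite <- (Rpower_O x) at 1 by lra. apply Rle_Rpower; assumption.
Qed.

Lemma rpow_INR_unbounded e K : 0 < e -> exists N : nat, (1 <= N)%nat /\ K < rpow (INR N) e.
Proof.
  intros he.
  set (x := rpow (Rmax K 1) (/ e)).
  assert (hx : 0 < x) by (apply rpow_gt0; pose proof (Rmax_r K 1); lra).
  destruct (archimed x) as [hup _].
  assert (hup0 : (0 < up x)%Z) by (apply lt_IZR; lra).
  exists (S (Z.to_nat (up x))). split; [lia |].
  assert (hN : x < INR (S (Z.to_nat (up x)))).
  { rewrite S_INR, INR_IZR_INZ, Z2Nat.id by lia. lra. }
  assert (hK : rpow x e = Rmax K 1).
  { apply rpow_inv_r; [exact he |]. pose proof (Rmax_r K 1); lra. }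
  pose proof (Rmax_l K 1). pose proof (rpow_lt x _ e he (conj (Rlt_le _ _ hx) hN)). lra.
Qed.

Lemma rpow_INR_exponent_le a b c :
  (forall N : nat, (1 <= N)%nat -> rpow (INR N) a <= c * rpow (INR N) b) -> a <= b.
Proof.
  intros h. destruct (Rle_dec a b) as [| hab]; [assumption | exfalso].
  destruct (rpow_INR_unbounded (a - b) c ltac:(lra)) as [N [hN hc]].
  assert (hNpos : 0 < INR N) by (apply lt_0_INR; lia).
  specialize (h N hN). replace a with ((a - b) + b) in h by ring.
  rewrite rpow_plus in h by exact hNpos.
  pose proof (rpow_gt0 (INR N) b hNpos). nra.
Qed.

Lemma Cmod_ge0 z : 0 <= Cmod z.
Proof. apply sqrt_pos. Qed.

Lemma Cmod_C0 : Cmod C0 = 0.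
Proof. unfold Cmod, C0; simpl. replace (0 * 0 + 0 * 0) with 0 by ring. apply sqrt_0. Qed.

Lemma Cmod_C1 : Cmod Defs.C1 = 1.
Proof. unfold Cmod, Defs.C1; simpl. replace (1 * 1 + 0 * 0) with 1 by ring. apply sqrt_1. Qed.

Lemma Cmod_opp1 z : Cmod (Cmul (-1, 0) z) = Cmod z.
Proof. destruct z as [a b]; unfold Cmod, Cmul; simpl. f_equal. ring. Qed.

Lemma Cmod_le_abs z : Cmod z <= Rabs (fst z) + Rabs (snd z).
Proof.
  destruct z as [a b]; unfold Cmod; simpl.
  pose proof (Rabs_pos a); pose proof (Rabs_pos b).
  rewrite <- (sqrt_Rsqr (Rabs a + Rabs b)) by lra.
  apply sqrt_le_1_alt. pose proof (Rsqr_abs a); pose proof (Rsqr_abs b). unfold Rsqr in *. nra.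
Qed.

Lemma Rabs_fst_le_Cmod z : Rabs (fst z) <= Cmod z.
Proof.
  unfold Cmod. rewrite <- sqrt_Rsqr_abs. apply sqrt_le_1_alt. unfold Rsqr.
  pose proof (Rle_0_sqr (snd z)); unfold Rsqr in *; lra.
Qed.

Lemma Rabs_snd_le_Cmod z : Rabs (snd z) <= Cmod z.
Proof.
  unfold Cmod. rewrite <- sqrt_Rsqr_abs. apply sqrt_le_1_alt. unfold Rsqr.
  pose proof (Rle_0_sqr (fst z)); unfold Rsqr in *; lra.
Qed.

Lemma Cmod_triangle a b : Cmod (Cadd a b) <= Cmod a + Cmod b.
Proof.
  destruct a as [x y], b as [u v]. unfold Cmod, Cadd; simpl.
  set (A := sqrt (x * x + y * y)). set (B := sqrt (u * u + v * v)).
  assert (hA : 0 <= A) by apply sqrt_pos. assert (hB : 0 <= B) by apply sqrt_pos.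
  assert (hA2 : A * A = x * x + y * y) by (apply sqrt_sqrt; nra).
  assert (hB2 : B * B = u * u + v * v) by (apply sqrt_sqrt; nra).
  rewrite <- (sqrt_Rsqr (A + B)) by lra.
  apply sqrt_le_1_alt. unfold Rsqr.
  assert (hCS : (x * u + y * v) * (x * u + y * v) <= (A * B) * (A * B)).
  { replace ((A * B) * (A * B)) with ((A * A) * (B * B)) by ring. rewrite hA2, hB2.
    pose proof (Rle_0_sqr (x * v - y * u)). unfold Rsqr in *. nra. }
  assert (0 <= A * B) by (apply Rmult_le_pos; assumption).
  assert (x * u + y * v <= A * B) by nra.
  nra.
Qed.

Lemma Cadd_C0_l z : Cadd C0 z = z.
Proof. destruct z; unfold Cadd, C0; simpl; f_equal; ring. Qed.

Lemma Cadd_C0_r z : Cadd z C0 = z.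
Proof. destruct z; unfold Cadd, C0; simpl; f_equal; ring. Qed.

Lemma Cmul_opp1_C0 : Cmul (-1, 0) C0 = C0.
Proof. unfold Cmul, C0; simpl; f_equal; ring. Qed.

Definition mpow (s : R) (z : Cx) : R := rpow (Cmod z) s.
Definition qconst (s : R) : R := rpow 2 s.

Lemma mpow_nonneg s z : 0 <= mpow s z.
Proof. apply rpow_nonneg. Qed.

Lemma mpow_C0 s : mpow s C0 = 0.
Proof. unfold mpow; rewrite Cmod_C0; apply rpow_0. Qed.

Lemma mpow_C1 s : mpow s Defs.C1 = 1.
Proof. unfold mpow; rewrite Cmod_C1; apply rpow_1. Qed.

Lemma mpow_opp1 s z : mpow s (Cmul (-1, 0) z) = mpow s z.
Proof. unfold mpow; rewrite Cmod_opp1; reflexivity. Qed.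

Lemma mpow_add_C0 s x y : x = C0 \/ y = C0 -> mpow s (Cadd x y) = mpow s x + mpow s y.
Proof.
  intros [-> | ->]; rewrite ?Cadd_C0_l, ?Cadd_C0_r, mpow_C0; ring.
Qed.

Lemma qconst_ge1 s : 0 < s -> 1 <= qconst s.
Proof. intro; apply rpow_ge1; lra. Qed.

Lemma mpow_add_le s a b : 0 < s ->
  mpow s (Cadd a b) <= qconst s * (mpow s a + mpow s b).
Proof.
  intros hs. unfold mpow, qconst.
  pose proof (Cmod_triangle a b). pose proof (Cmod_ge0 a). pose proof (Cmod_ge0 b).
  pose proof (rpow_nonneg (Cmod a) s). pose proof (rpow_nonneg (Cmod b) s).
  pose proof (rpow_nonneg 2 s).
  (* |a + b| <= 2 max(|a|, |b|) *)
  set (m := Rmax (Cmod a) (Cmod b)).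
  assert (hm : rpow m s <= rpow (Cmod a) s + rpow (Cmod b) s).
  { unfold m, Rmax. destruct (Rle_dec (Cmod a) (Cmod b)); lra. }
  assert (ha_m : Cmod a <= m) by apply Rmax_l.
  assert (hb_m : Cmod b <= m) by apply Rmax_r.
  assert (hab : rpow (Cmod (Cadd a b)) s <= rpow (2 * m) s).
  { apply rpow_le; [exact hs |]. split; [apply Cmod_ge0 | lra]. }
  rewrite rpow_mult in hab by lra.
  nra.
Qed.

Lemma mpow_le_sub s a b : 0 < s ->
  mpow s a <= qconst s * (mpow s (Cadd a b) + mpow s b).
Proof.
  intros hs. replace a with (Cadd (Cadd a b) (Cmul (-1, 0) b)) at 1
    by (destruct a, b; unfold Cadd, Cmul; simpl; f_equal; ring).
  rewrite <- (mpow_opp1 s b). apply mpow_add_le. exact hs.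
Qed.

(** [fsum f n] has [n] terms [f 0], ..., [f (n - 1)], whereas [sum_f_R0 f N] has [N + 1]. *)
Fixpoint fsum (f : nat -> R) (n : nat) : R :=
  match n with O => 0 | S m => fsum f m + f m end.

Lemma fsum_ext f g n : (forall k, (k < n)%nat -> f k = g k) -> fsum f n = fsum g n.
Proof.
  induction n; simpl; intros h; [reflexivity |].
  rewrite IHn by (intros; apply h; lia). rewrite h by lia. reflexivity.
Qed.

Lemma fsum_le f g n : (forall k, (k < n)%nat -> f k <= g k) -> fsum f n <= fsum g n.
Proof.
  induction n; simpl; intros h; [lra |].
  pose proof (IHn ltac:(intros; apply h; lia)). pose proof (h n ltac:(lia)). lra.
Qed.

Lemma fsum_nonneg f n : (forall k, 0 <= f k) -> 0 <= fsum f n.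
Proof. intros h. induction n; simpl; [lra |]. pose proof (h n). lra. Qed.

Lemma fsum_mono f m n : (forall k, 0 <= f k) -> (m <= n)%nat -> fsum f m <= fsum f n.
Proof. intros hf h. induction h; [lra |]. simpl. pose proof (hf m0). lra. Qed.

Lemma fsum_add f g n : fsum (fun k => f k + g k) n = fsum f n + fsum g n.
Proof. induction n; simpl; [ring |]. rewrite IHn; ring. Qed.

Lemma fsum_scal c f n : fsum (fun k => c * f k) n = c * fsum f n.
Proof. induction n; simpl; [ring |]. rewrite IHn; ring. Qed.

Lemma fsum_const c n : fsum (fun _ => c) n = INR n * c.
Proof. induction n; simpl fsum; [simpl; ring |]. rewrite IHn, S_INR; ring. Qed.

Lemma fsum_comm (g : nat -> nat -> R) n K :
  fsum (fun k => fsum (fun i => g i k) n) K = fsum (fun i => fsum (fun k => g i k) K) n.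
Proof.
  induction n; simpl.
  - rewrite fsum_const; simpl; ring.
  - rewrite fsum_add, IHn. reflexivity.
Qed.

Lemma sum_f_R0_fsum f N : sum_f_R0 f N = fsum f (S N).
Proof. induction N; simpl; [ring |]. rewrite IHN. reflexivity. Qed.

Definition psum (s : R) (y : nat -> Cx) (K : nat) : R := fsum (fun k => mpow s (y k)) K.

Lemma psum_nonneg s y K : 0 <= psum s y K.
Proof. apply fsum_nonneg; intros; apply mpow_nonneg. Qed.

Lemma psum_mono s y m n : (m <= n)%nat -> psum s y m <= psum s y n.
Proof. intros; apply fsum_mono; [intros; apply mpow_nonneg | assumption]. Qed.

Lemma psum_stable s y n : (forall k, (n <= k)%nat -> y k = C0) ->
  forall K, (n <= K)%nat -> psum s y K = psum s y n.
Proof.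
  intros hy K hK. induction hK; [reflexivity |].
  unfold psum in *; simpl. rewrite IHhK, hy, mpow_C0 by lia. ring.
Qed.

Lemma lp_sum_spec s y : lp_member s y ->
  Un_cv (fun N => sum_f_R0 (fun n => rpow (Cmod (y n)) s) N) (lp_sum s y).
Proof. intros h. unfold lp_sum. apply epsilon_spec. exact h. Qed.

Lemma psum_le_lp_sum s y K : lp_member s y -> psum s y K <= lp_sum s y.
Proof.
  intros h. apply Rle_trans with (psum s y (S K)); [apply psum_mono; lia |].
  unfold psum, mpow. rewrite <- sum_f_R0_fsum.
  apply sum_incr; [apply lp_sum_spec; exact h | intros; apply rpow_nonneg].
Qed.

Lemma lp_sum_nonneg s y : lp_member s y -> 0 <= lp_sum s y.
Proof.
  intros h. pose proof (psum_le_lp_sum s y 0 h) as h0. unfold psum in h0; simpl in h0. lra.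
Qed.

Lemma mpow_le_lp_sum s y k : lp_member s y -> mpow s (y k) <= lp_sum s y.
Proof.
  intros h. pose proof (psum_le_lp_sum s y (S k) h). unfold psum in H; simpl in H.
  pose proof (psum_nonneg s y k). unfold psum in H0. lra.
Qed.

Lemma lp_sum_approx s y tau : lp_member s y -> 0 < tau ->
  exists K, lp_sum s y - tau <= psum s y K.
Proof.
  intros h ht. destruct (lp_sum_spec s y h tau ht) as [N hN].
  exists (S N). specialize (hN N (le_n N)). unfold R_dist in hN.
  rewrite sum_f_R0_fsum in hN. apply Rabs_def2 in hN. unfold psum, mpow. lra.
Qed.

Lemma lp_sum_le s y B : lp_member s y -> (forall K, psum s y K <= B) -> lp_sum s y <= B.
Proof.
  intros h hB. destruct (Rle_dec (lp_sum s y) B) as [| hn]; [assumption |].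
  destruct (lp_sum_approx s y ((lp_sum s y - B) / 2) h ltac:(lra)) as [K hK].
  specialize (hB K). lra.
Qed.

Lemma lp_sum_finite_support s y n : (forall k, (n <= k)%nat -> y k = C0) ->
  lp_member s y /\ lp_sum s y = psum s y n.
Proof.
  intros hy.
  assert (hcv : Un_cv (fun N => sum_f_R0 (fun k => rpow (Cmod (y k)) s) N) (psum s y n)).
  { intros eps he. exists n. intros N hN. unfold R_dist.
    rewrite sum_f_R0_fsum. change (Rabs (psum s y (S N) - psum s y n) < eps).
    rewrite (psum_stable s y n hy (S N)) by lia. rewrite Rminus_diag, Rabs_R0. exact he. }
  assert (hm : lp_member s y) by (exists (psum s y n); exact hcv).
  split; [exact hm |]. eapply UL_sequence; [apply lp_sum_spec |]; eassumption.
Qed.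

Definition vsub (x y : nat -> Cx) : nat -> Cx := fun k => Cadd (x k) (Cmul (-1, 0) (y k)).

Fixpoint vsum (u : nat -> nat -> Cx) (n : nat) : nat -> Cx :=
  match n with
  | O => fun _ => C0
  | S m => fun k => Cadd (vsum u m k) (u m k)
  end.

Lemma psum_add_disjoint s x y K : (forall k, x k = C0 \/ y k = C0) ->
  psum s (fun k => Cadd (x k) (y k)) K = psum s x K + psum s y K.
Proof.
  intros h. unfold psum. rewrite <- fsum_add. apply fsum_ext. intros k _. apply mpow_add_C0, h.
Qed.

Lemma mpow_vsum_le s u n k : 0 < s ->
  mpow s (vsum u n k) <= qconst s ^ n * fsum (fun i => mpow s (u i k)) n.
Proof.
  intros hs. pose proof (qconst_ge1 s hs) as hQ. induction n as [| n IH]; simpl.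
  - rewrite mpow_C0. lra.
  - assert (1 <= qconst s ^ n) by (apply pow_R1_Rle; lra).
    pose proof (fsum_nonneg (fun i => mpow s (u i k)) n (fun _ => mpow_nonneg _ _)).
    pose proof (mpow_nonneg s (u n k)).
    eapply Rle_trans; [apply mpow_add_le; exact hs |].
    apply Rle_trans with (qconst s * (qconst s ^ n * fsum (fun i => mpow s (u i k)) n
                                      + qconst s ^ n * mpow s (u n k))); [| right; ring].
    apply Rmult_le_compat_l; [lra |]. apply Rplus_le_compat; [exact IH | nra].
Qed.

Lemma psum_vsum_le s u n K : 0 < s ->
  psum s (vsum u n) K <= qconst s ^ n * fsum (fun i => psum s (u i) K) n.
Proof.
  intros hs. unfold psum. eapply Rle_trans.
  - apply fsum_le. intros k _. apply mpow_vsum_le. exact hs.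
  - rewrite fsum_scal, fsum_comm. right; reflexivity.
Qed.

Definition unit_vec (a : nat) : nat -> Cx := fun k => if Nat.eqb k a then Defs.C1 else C0.
Definition unit_diff (a b : nat) : nat -> Cx := vsub (unit_vec a) (unit_vec b).

Lemma fsum_indicator a n :
  fsum (fun k => if Nat.eqb k a then 1 else 0) n = if Nat.ltb a n then 1 else 0.
Proof.
  induction n; simpl; [reflexivity |]. rewrite IHn.
  destruct (Nat.eqb_spec n a), (Nat.ltb_spec a n), (Nat.ltb_spec a (S n)); try lia; ring.
Qed.

Lemma psum_unit_vec s a K : psum s (unit_vec a) K = if Nat.ltb a K then 1 else 0.
Proof.
  rewrite <- fsum_indicator. apply fsum_ext. intros k _. unfold unit_vec.
  destruct (Nat.eqb k a); [apply mpow_C1 | apply mpow_C0].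
Qed.

Lemma unit_vec_member r a : lp_member r (unit_vec a) /\ lp_sum r (unit_vec a) = 1.
Proof.
  destruct (lp_sum_finite_support r (unit_vec a) (S a)) as [hm ->].
  - intros k hk. unfold unit_vec. destruct (Nat.eqb_spec k a); [lia | reflexivity].
  - rewrite psum_unit_vec. destruct (Nat.ltb_spec a (S a)); [auto | lia].
Qed.

Lemma psum_unit_diff s a b K : a <> b ->
  psum s (unit_diff a b) K = psum s (unit_vec a) K + psum s (unit_vec b) K.
Proof.
  intros hab. unfold psum. rewrite <- fsum_add. apply fsum_ext. intros k _.
  unfold unit_diff, vsub. rewrite mpow_add_C0, mpow_opp1; [reflexivity |].
  unfold unit_vec. destruct (Nat.eqb_spec k a); [right | left; reflexivity].
  destruct (Nat.eqb_spec k b); [lia | apply Cmul_opp1_C0].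
Qed.

Lemma unit_diff_zero a b k : k <> a -> k <> b -> unit_diff a b k = C0.
Proof.
  intros ha hb. unfold unit_diff, vsub, unit_vec.
  destruct (Nat.eqb_spec k a), (Nat.eqb_spec k b); try lia.
  rewrite Cmul_opp1_C0. apply Cadd_C0_r.
Qed.

Lemma unit_diff_member r a b : (a < b)%nat ->
  lp_member r (unit_diff a b) /\ lp_sum r (unit_diff a b) = 2.
Proof.
  intros hab. destruct (lp_sum_finite_support r (unit_diff a b) (S b)) as [hm ->].
  - intros k hk. apply unit_diff_zero; lia.
  - split; [exact hm |]. rewrite psum_unit_diff, !psum_unit_vec by lia.
    destruct (Nat.ltb_spec a (S b)), (Nat.ltb_spec b (S b)); try lia. ring.
Qed.

Section DisjointUnitDiffs.

Variables (a b : nat -> nat).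
Hypothesis ab_chain : forall i, (a i < b i)%nat /\ (b i < a (S i))%nat.

Let X N := vsum (fun i => unit_diff (a i) (b i)) N.

Lemma vsum_unit_diff_support N k : (a N <= k)%nat -> X N k = C0.
Proof.
  revert k; induction N as [| N IH]; intros k hk; [reflexivity |].
  destruct (ab_chain N). unfold X; cbn [vsum]; fold (X N).
  rewrite IH, unit_diff_zero by lia. apply Cadd_C0_r.
Qed.

Lemma psum_vsum_unit_diff r N : psum r (X N) (a N) = 2 * INR N.
Proof.
  induction N as [| N IH].
  - rewrite (psum_stable r (X 0) 0); [unfold psum; simpl; ring | reflexivity | lia].
  - destruct (ab_chain N). unfold X; cbn [vsum]; fold (X N).
    rewrite psum_add_disjoint.
    + rewrite (psum_stable r (X N) (a N)) by (auto using vsum_unit_diff_support; lia).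
      rewrite IH, psum_unit_diff, !psum_unit_vec by lia.
      destruct (Nat.ltb_spec (a N) (a (S N))), (Nat.ltb_spec (b N) (a (S N))); try lia.
      rewrite S_INR. ring.
    + intros k. destruct (Nat.le_gt_cases (a N) k).
      * left. apply vsum_unit_diff_support. exact H1.
      * right. apply unit_diff_zero; lia.
Qed.

Lemma lp_sum_vsum_unit_diff r N : lp_member r (X N) /\ lp_sum r (X N) = 2 * INR N.
Proof.
  destruct (lp_sum_finite_support r (X N) (a N) (vsum_unit_diff_support N)) as [hm ->].
  split; [exact hm | apply psum_vsum_unit_diff].
Qed.

End DisjointUnitDiffs.

Lemma psum_add_le s x y K : 0 < s ->
  psum s (fun k => Cadd (x k) (y k)) K <= qconst s * (psum s x K + psum s y K).
Proof.
  intros hs. unfold psum. rewrite <- fsum_add, <- fsum_scal.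
  apply fsum_le. intros k _. apply mpow_add_le. exact hs.
Qed.

Lemma psum_le_sub s x y K : 0 < s ->
  psum s x K <= qconst s * (psum s (fun k => Cadd (x k) (y k)) K + psum s y K).
Proof.
  intros hs. unfold psum. rewrite <- fsum_add, <- fsum_scal.
  apply fsum_le. intros k _. apply mpow_le_sub. exact hs.
Qed.

(** * Blocks [lo, hi) of coordinates *)

Definition in_block (lo hi k : nat) : bool := Nat.leb lo k && Nat.ltb k hi.
Definition on_block (lo hi : nat) (w : nat -> Cx) : nat -> Cx :=
  fun k => if in_block lo hi k then w k else C0.
Definition off_block (lo hi : nat) (w : nat -> Cx) : nat -> Cx :=
  fun k => if in_block lo hi k then C0 else w k.

Lemma in_block_spec lo hi k : in_block lo hi k = true <-> (lo <= k < hi)%nat.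
Proof.
  unfold in_block. rewrite Bool.andb_true_iff, Nat.leb_le, Nat.ltb_lt. tauto.
Qed.

Lemma on_block_outside lo hi w k : (k < lo \/ hi <= k)%nat -> on_block lo hi w k = C0.
Proof.
  intros hk. unfold on_block. destruct (in_block lo hi k) eqn:e; [| reflexivity].
  apply in_block_spec in e. lia.
Qed.

Lemma psum_on_off s lo hi w K :
  psum s w K = psum s (on_block lo hi w) K + psum s (off_block lo hi w) K.
Proof.
  unfold psum. rewrite <- fsum_add. apply fsum_ext. intros k _.
  unfold on_block, off_block. destruct (in_block lo hi k); rewrite mpow_C0; ring.
Qed.

Lemma psum_on_block_le s lo hi w K : psum s (on_block lo hi w) K <= psum s w K.
Proof.
  rewrite (psum_on_off s lo hi w K). pose proof (psum_nonneg s (off_block lo hi w) K). lra.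
Qed.

Lemma psum_on_block_le_hi s lo hi w K :
  psum s (on_block lo hi w) K <= psum s (on_block lo hi w) hi.
Proof.
  destruct (Nat.le_gt_cases K hi); [apply psum_mono; assumption |].
  right. apply psum_stable; [| lia]. intros k hk. apply on_block_outside. lia.
Qed.

Lemma psum_on_block_prefix s hi w : psum s (on_block 0 hi w) hi = psum s w hi.
Proof.
  apply fsum_ext. intros k hk. unfold on_block.
  replace (in_block 0 hi k) with true by (symmetry; apply in_block_spec; lia). reflexivity.
Qed.

Lemma lp_sum_le_on_block s lo hi w tau : lp_member s w ->
  (forall K, psum s (off_block lo hi w) K <= tau) ->
  lp_sum s w <= psum s (on_block lo hi w) hi + tau.
Proof.
  intros hw hoff. apply lp_sum_le; [exact hw |]. intros K.
  rewrite (psum_on_off s lo hi w K). pose proof (hoff K).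
  pose proof (psum_on_block_le_hi s lo hi w K). lra.
Qed.

Lemma psum_off_block_le s lo hi w K : (lo <= hi)%nat -> lp_member s w ->
  psum s (off_block lo hi w) K <= psum s w lo + (lp_sum s w - psum s w hi).
Proof.
  intros hlh hw.
  assert (hsplit : psum s (off_block lo hi w) K
                   <= psum s (on_block 0 lo w) K + psum s (off_block 0 hi w) K).
  { unfold psum. rewrite <- fsum_add. apply fsum_le. intros k _.
    unfold on_block, off_block.
    destruct (in_block lo hi k) eqn:e1, (in_block 0 lo k) eqn:e2, (in_block 0 hi k) eqn:e3;
      rewrite ?in_block_spec in *; rewrite ?mpow_C0;
      try (pose proof (mpow_nonneg s (w k)); lra);
      exfalso; repeat match goal with h : in_block _ _ _ = false |- _ =>
        apply Bool.not_true_iff_false in h; rewrite in_block_spec in h end; lia. }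
  assert (hhead : psum s (on_block 0 lo w) K <= psum s w lo).
  { eapply Rle_trans; [apply psum_on_block_le_hi |]. rewrite psum_on_block_prefix. lra. }
  assert (htail : psum s (off_block 0 hi w) K <= lp_sum s w - psum s w hi).
  { apply Rle_trans with (psum s (off_block 0 hi w) (K + hi)); [apply psum_mono; lia |].
    pose proof (psum_on_off s 0 hi w (K + hi)) as hKh.
    rewrite (psum_stable s (on_block 0 hi w) hi
               (fun k hk => on_block_outside 0 hi w k (or_intror hk))) in hKh by lia.
    rewrite psum_on_block_prefix in hKh.
    pose proof (psum_le_lp_sum s w (K + hi) hw). lra. }
  lra.
Qed.

Section BlockSums.

Variables (s tau : R) (w : nat -> nat -> Cx) (H : nat -> nat).
Hypotheses (hs : 0 < s) (H_step : forall i, (H i <= H (S i))%nat)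
  (w_off_small : forall i K, psum s (off_block (H i) (H (S i)) (w i)) K <= tau).

Let on i := on_block (H i) (H (S i)) (w i).
Let off i := off_block (H i) (H (S i)) (w i).

Lemma H_mono i j : (i <= j)%nat -> (H i <= H j)%nat.
Proof. induction 1; [lia | pose proof (H_step m); lia]. Qed.

Lemma vsum_on_off N k : vsum w N k = Cadd (vsum on N k) (vsum off N k).
Proof.
  induction N as [| N IH]; cbn [vsum].
  - symmetry. apply Cadd_C0_r.
  - rewrite IH. unfold on, off, on_block, off_block.
    destruct (in_block _ _ k), (vsum on N k), (vsum off N k), (w N k);
      unfold Cadd, C0; simpl; f_equal; ring.
Qed.

Lemma vsum_on_support N k : (H N <= k)%nat -> vsum on N k = C0.
Proof.
  induction N as [| N IH]; intros hk; cbn [vsum]; [reflexivity |].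
  pose proof (H_step N). rewrite IH by lia.
  unfold on. rewrite on_block_outside by lia. apply Cadd_C0_r.
Qed.

Lemma psum_vsum_on N K : psum s (vsum on N) K = fsum (fun i => psum s (on i) K) N.
Proof.
  induction N as [| N IH]; cbn [vsum fsum].
  - apply (psum_stable s _ 0); [reflexivity | lia].
  - rewrite psum_add_disjoint, IH; [reflexivity |].
    intros k. destruct (Nat.le_gt_cases (H N) k).
    + left. apply vsum_on_support. assumption.
    + right. unfold on. apply on_block_outside. lia.
Qed.

Lemma psum_vsum_off_le N K : psum s (vsum off N) K <= qconst s ^ N * (INR N * tau).
Proof.
  eapply Rle_trans; [apply psum_vsum_le; exact hs |].
  apply Rmult_le_compat_l; [apply pow_le; pose proof (qconst_ge1 s hs); lra |].
  rewrite <- fsum_const. apply fsum_le. intros i _. apply w_off_small.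
Qed.

Variables (N : nat) (alpha beta : R).
Hypotheses (w_member : forall i, lp_member s (w i))
  (w_size : forall i, alpha <= lp_sum s (w i) <= beta)
  (W_member : lp_member s (vsum w N)).

Lemma lp_sum_vsum_lower :
  INR N * (alpha - tau) <= qconst s * (lp_sum s (vsum w N) + qconst s ^ N * (INR N * tau)).
Proof.
  assert (hon : INR N * (alpha - tau) <= psum s (vsum on N) (H N)).
  { rewrite psum_vsum_on, <- fsum_const. apply fsum_le. intros i hi.
    pose proof (lp_sum_le_on_block s _ _ (w i) tau (w_member i) (w_off_small i)).
    pose proof (w_size i). fold (on i) in H0.
    assert (psum s (on i) (H (S i)) <= psum s (on i) (H N)) by (apply psum_mono, H_mono; lia).
    lra. }
  pose proof (psum_le_sub s (vsum on N) (vsum off N) (H N) hs) as hsub.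
  rewrite (functional_extensionality (fun k => Cadd (vsum on N k) (vsum off N k)) (vsum w N))
    in hsub by (intros k; symmetry; apply vsum_on_off).
  pose proof (psum_le_lp_sum s _ (H N) W_member).
  pose proof (psum_vsum_off_le N (H N)). pose proof (qconst_ge1 s hs).
  nra.
Qed.

Lemma lp_sum_vsum_upper :
  lp_sum s (vsum w N) <= qconst s * (INR N * beta + qconst s ^ N * (INR N * tau)).
Proof.
  apply lp_sum_le; [exact W_member |]. intros K.
  replace (vsum w N) with (fun k => Cadd (vsum on N k) (vsum off N k))
    by (apply functional_extensionality; intros k; symmetry; apply vsum_on_off).
  eapply Rle_trans; [apply psum_add_le; exact hs |].
  apply Rmult_le_compat_l; [pose proof (qconst_ge1 s hs); lra |].
  apply Rplus_le_compat; [| apply psum_vsum_off_le].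
  rewrite psum_vsum_on, <- fsum_const. apply fsum_le. intros i _.
  pose proof (psum_on_block_le s (H i) (H (S i)) (w i) K).
  pose proof (psum_le_lp_sum s (w i) K (w_member i)). pose proof (w_size i).
  unfold on. lra.
Qed.

End BlockSums.

(** * Pigeonhole *)

Definition infinitely_often (P : nat -> Prop) : Prop := forall B, exists n, (B <= n)%nat /\ P n.

Lemma infinitely_often_fiber K (P : nat -> Prop) (f : nat -> nat) : infinitely_often P ->
  (forall n, P n -> (f n <= K)%nat) -> exists v, infinitely_often (fun n => P n /\ f n = v).
Proof.
  revert P. induction K as [| K IH]; intros P hP hf.
  - exists 0%nat. intros B. destruct (hP B) as [n [hBn hn]]. exists n.
    specialize (hf n hn). repeat split; auto; lia.
  - destruct (classic (infinitely_often (fun n => P n /\ f n = S K))) as [h | h];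
      [exists (S K); exact h |].
    apply not_all_ex_not in h as [B0 hB0].
    destruct (IH (fun n => P n /\ (B0 <= n)%nat)) as [v hv].
    + intros B. destruct (hP (Nat.max B B0)) as [n [h1 h2]]. exists n. repeat split; auto; lia.
    + intros n [hn hB0n]. specialize (hf n hn).
      assert (f n <> S K) by (intro e; apply hB0; exists n; auto). lia.
    + exists v. intros B. destruct (hv B) as [n [h1 [[h2 _] h3]]]. exists n. auto.
Qed.

Lemma infinitely_often_common_values L (P : nat -> Prop) (g : nat -> nat -> nat) K :
  infinitely_often P ->
  (forall n k, P n -> (g n k <= K)%nat) ->
  exists P' : nat -> Prop, infinitely_often P' /\ (forall n, P' n -> P n) /\
    (forall n m, P' n -> P' m -> forall k, (k < L)%nat -> g n k = g m k).
Proof.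
  induction L as [| L IH]; intros hP hg.
  - exists P. split; [exact hP |]. split; [auto | intros; lia].
  - destruct IH as [P' [h1 [h2 h3]]]; [exact hP | exact hg |].
    destruct (infinitely_often_fiber K P' (fun n => g n L) h1) as [v hv];
      [intros; apply hg, h2; auto |].
    exists (fun n => P' n /\ g n L = v). split; [exact hv |]. split; [intros n [hn _]; auto |].
    intros n m [hn e1] [hm e2] k hk. destruct (Nat.eq_dec k L) as [-> | hkL]; [congruence |].
    apply h3; auto; lia.
Qed.

(** Grid index of [v] in [[-M, M]] with mesh [eta]. *)
Definition quantize (eta M v : R) : nat := Z.to_nat (up ((v + M) / eta)).

Lemma Rdiv_nonneg a b : 0 <= a -> 0 < b -> 0 <= a / b.
Proof. intros; apply Rmult_le_pos; [assumption | left; apply Rinv_0_lt_compat; assumption]. Qed.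

Lemma Rabs_le_bounds v M : Rabs v <= M -> - M <= v <= M.
Proof.
  intros h. pose proof (Rle_abs v). pose proof (Rle_abs (- v)). rewrite Rabs_Ropp in *. lra.
Qed.

Lemma quantize_close eta M v v' : 0 < eta -> Rabs v <= M -> Rabs v' <= M ->
  quantize eta M v = quantize eta M v' -> Rabs (v - v') < eta.
Proof.
  intros he hv hv' hq. unfold quantize in hq.
  apply Rabs_le_bounds in hv; apply Rabs_le_bounds in hv'.
  assert (h0 : 0 <= (v + M) / eta) by (apply Rdiv_nonneg; lra).
  assert (h0' : 0 <= (v' + M) / eta) by (apply Rdiv_nonneg; lra).
  destruct (archimed ((v + M) / eta)) as [a1 a2], (archimed ((v' + M) / eta)) as [b1 b2].
  assert ((0 < up ((v + M) / eta))%Z) by (apply lt_IZR; lra).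
  assert ((0 < up ((v' + M) / eta))%Z) by (apply lt_IZR; lra).
  assert (e : up ((v + M) / eta) = up ((v' + M) / eta)) by (apply Z2Nat.inj; lia).
  rewrite e in a1, a2.
  assert (hd : Rabs ((v + M) / eta - (v' + M) / eta) < 1) by (apply Rabs_def1; lra).
  replace ((v + M) / eta - (v' + M) / eta) with ((v - v') / eta) in hd by (field; lra).
  unfold Rdiv in hd. rewrite Rabs_mult, Rabs_inv, (Rabs_right eta) in hd by lra.
  apply Rmult_lt_compat_r with (r := eta) in hd; [| exact he].
  rewrite Rmult_assoc, Rinv_l, Rmult_1_r, Rmult_1_l in hd by lra. exact hd.
Qed.

Lemma quantize_bound eta M v : 0 < eta -> Rabs v <= M ->
  (quantize eta M v <= Z.to_nat (up (2 * M / eta)))%nat.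
Proof.
  intros he hv. unfold quantize. apply Rabs_le_bounds in hv.
  destruct (archimed ((v + M) / eta)) as [a1 a2], (archimed (2 * M / eta)) as [b1 b2].
  assert ((v + M) / eta <= 2 * M / eta)
    by (unfold Rdiv; apply Rmult_le_compat_r; [left; apply Rinv_0_lt_compat |]; lra).
  assert (hlt : IZR (up ((v + M) / eta)) < IZR (up (2 * M / eta)) + 1) by lra.
  rewrite <- plus_IZR in hlt. apply lt_IZR in hlt. apply Z2Nat.inj_le; try lia.
  - assert (0 <= (v + M) / eta) by (apply Rdiv_nonneg; lra). apply le_IZR. lra.
  - assert (0 <= 2 * M / eta) by (apply Rdiv_nonneg; lra). apply le_IZR. lra.
Qed.

Lemma close_pair (F : nat -> nat -> Cx) (M : R) (L : nat) (eta : R) (B : nat) : 0 < eta ->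
  (forall n k, Cmod (F n k) <= M) ->
  exists a b, (B <= a)%nat /\ (a < b)%nat /\
    forall k, (k < L)%nat -> Cmod (vsub (F a) (F b) k) < eta.
Proof.
  intros he hM. set (eta2 := eta / 2). assert (he2 : 0 < eta2) by (unfold eta2; lra).
  assert (hre : forall n k, Rabs (fst (F n k)) <= M)
    by (intros; eapply Rle_trans; [apply Rabs_fst_le_Cmod | apply hM]).
  assert (him : forall n k, Rabs (snd (F n k)) <= M)
    by (intros; eapply Rle_trans; [apply Rabs_snd_le_Cmod | apply hM]).
  destruct (infinitely_often_common_values L (fun _ => True)
              (fun n k => quantize eta2 M (fst (F n k)))
              (Z.to_nat (up (2 * M / eta2)))) as [P1 [hP1 [_ e1]]].
  { intros B0. exists B0. auto. }
  { intros; apply quantize_bound; auto. }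
  destruct (infinitely_often_common_values L P1 (fun n k => quantize eta2 M (snd (F n k)))
              (Z.to_nat (up (2 * M / eta2)))) as [P2 [hP2 [h21 e2]]]; [exact hP1 | |].
  { intros; apply quantize_bound; auto. }
  destruct (hP2 B) as [a [ha pa]]. destruct (hP2 (S a)) as [b [hb pb]].
  exists a, b. split; [exact ha |]. split; [lia |]. intros k hk.
  eapply Rle_lt_trans; [apply Cmod_le_abs |]. unfold vsub, Cadd, Cmul; simpl.
  replace (fst (F a k) + (-1 * fst (F b k) - 0 * snd (F b k)))
    with (fst (F a k) - fst (F b k)) by ring.
  replace (snd (F a k) + (-1 * snd (F b k) + 0 * fst (F b k)))
    with (snd (F a k) - snd (F b k)) by ring.
  assert (Rabs (fst (F a k) - fst (F b k)) < eta2)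
    by (apply (quantize_close eta2 M); auto; apply e1; auto).
  assert (Rabs (snd (F a k) - snd (F b k)) < eta2)
    by (apply (quantize_close eta2 M); auto).
  unfold eta2 in *. lra.
Qed.

(** * Isomorphic embeddings of [lp r] into [lp s]: the gliding hump *)

Record isomorphic_embedding (C A : NSpace) (J : ncar C -> ncar A) (m M : R) : Prop := {
  emb_dom : forall c, ndom C c -> ndom A (J c);
  emb_add : forall c c', ndom C c -> ndom C c' -> J (nadd C c c') = nadd A (J c) (J c');
  emb_scal : forall a c, ndom C c -> J (nscal C a c) = nscal A a (J c);
  emb_pos : 0 < m;
  emb_lower : forall c, ndom C c -> m * nnorm C c <= nnorm A (J c);
  emb_upper : forall c, ndom C c -> nnorm A (J c) <= M * nnorm C c }.

Lemma lp_member_opp1 r y : lp_member r y -> lp_member r (fun k => Cmul (-1, 0) (y k)).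
Proof.
  intros [l hl]. exists l.
  replace (fun n => rpow (Cmod (Cmul (-1, 0) (y n))) r) with (fun n => rpow (Cmod (y n)) r);
    [exact hl |].
  apply functional_extensionality. intros n. rewrite Cmod_opp1. reflexivity.
Qed.

Lemma lp_sum_le_rpow_norm s y c : 0 < s -> lp_member s y -> lp_norm s y <= c ->
  lp_sum s y <= rpow c s.
Proof.
  intros hs hy hc. rewrite <- (rpow_inv_r (lp_sum s y) s hs (lp_sum_nonneg s y hy)).
  apply rpow_le; [exact hs |]. split; [apply rpow_nonneg | exact hc].
Qed.

Lemma rpow_norm_le_lp_sum s y c : 0 < s -> lp_member s y -> 0 <= c -> c <= lp_norm s y ->
  rpow c s <= lp_sum s y.
Proof.
  intros hs hy hc0 hc. rewrite <- (rpow_inv_r (lp_sum s y) s hs (lp_sum_nonneg s y hy)).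
  unfold lp_norm in hc. apply rpow_le; [exact hs | lra].
Qed.

Section LpEmbedding.

Variables (r s m M : R) (J : (nat -> Cx) -> nat -> Cx).
Hypotheses (hs : 0 < s) (hJ : isomorphic_embedding (lp r) (lp s) J m M).

Lemma J_member x : lp_member r x -> lp_member s (J x).
Proof. apply (emb_dom _ _ _ _ _ hJ). Qed.

Lemma J_vsub x y : lp_member r x -> lp_member r y -> J (vsub x y) = vsub (J x) (J y).
Proof.
  intros hx hy. unfold vsub.
  change (J (nadd (lp r) x (nscal (lp r) (-1, 0) y))
          = nadd (lp s) (J x) (nscal (lp s) (-1, 0) (J y))).
  rewrite (emb_add _ _ _ _ _ hJ); [| exact hx | apply lp_member_opp1, hy].
  rewrite (emb_scal _ _ _ _ _ hJ) by exact hy. reflexivity.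
Qed.

Lemma J_zero : J (fun _ => C0) = (fun _ => C0).
Proof.
  assert (hz : lp_member r (fun _ : nat => C0)) by (apply (lp_sum_finite_support r _ 0); auto).
  assert (e : forall z, Cmul C0 z = C0) by (intros [x y]; unfold Cmul, C0; simpl; f_equal; ring).
  pose proof (emb_scal _ _ _ _ _ hJ C0 _ hz) as h. cbn [nscal lp] in h.
  rewrite (functional_extensionality _ _ (fun n => e C0)) in h. rewrite h.
  apply functional_extensionality. intros n. apply e.
Qed.

Lemma J_vsum u n : (forall j, lp_member r (vsum u j)) -> (forall i, lp_member r (u i)) ->
  J (vsum u n) = vsum (fun i => J (u i)) n.
Proof.
  intros hsum hu. induction n as [| n IH]; cbn [vsum]; [apply J_zero |].
  change (J (nadd (lp r) (vsum u n) (u n))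
          = fun k => Cadd (vsum (fun i => J (u i)) n k) (J (u n) k)).
  rewrite (emb_add _ _ _ _ _ hJ) by (apply hsum || apply hu). rewrite IH. reflexivity.
Qed.

Lemma J_unit_vec_bound n k : Cmod (J (unit_vec n) k) <= M.
Proof.
  destruct (unit_vec_member r n) as [hm hsum].
  assert (hnorm : lp_norm r (unit_vec n) = 1) by (unfold lp_norm; rewrite hsum; apply rpow_1).
  pose proof (emb_upper _ _ _ _ _ hJ _ hm) as hup. cbn [nnorm lp] in hup.
  rewrite hnorm, Rmult_1_r in hup.
  assert (hM : 0 <= M) by (eapply Rle_trans; [apply rpow_nonneg | exact hup]).
  apply (rpow_le_inv _ _ s hs hM).
  eapply Rle_trans; [apply (mpow_le_lp_sum s _ k (J_member _ hm)) |].
  apply lp_sum_le_rpow_norm; [exact hs | apply J_member, hm | exact hup].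
Qed.

Let alpha := rpow (m * rpow 2 (/ r)) s.
Let beta := rpow (M * rpow 2 (/ r)) s.

Lemma alpha_pos : 0 < alpha.
Proof.
  apply rpow_gt0. apply Rmult_lt_0_compat; [apply (emb_pos _ _ _ _ _ hJ) | apply rpow_gt0; lra].
Qed.

Lemma J_unit_diff_size a b : (a < b)%nat -> alpha <= lp_sum s (J (unit_diff a b)) <= beta.
Proof.
  intros hab. destruct (unit_diff_member r a b hab) as [hm hsum].
  assert (hnorm : lp_norm r (unit_diff a b) = rpow 2 (/ r))
    by (unfold lp_norm; rewrite hsum; reflexivity).
  pose proof (emb_lower _ _ _ _ _ hJ _ hm) as hlo. pose proof (emb_upper _ _ _ _ _ hJ _ hm) as hup.
  cbn [nnorm lp] in hlo, hup. rewrite hnorm in hlo, hup.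
  pose proof (emb_pos _ _ _ _ _ hJ). pose proof (rpow_gt0 2 (/ r) ltac:(lra)).
  split.
  - apply rpow_norm_le_lp_sum; [exact hs | apply J_member, hm | nra | exact hlo].
  - apply lp_sum_le_rpow_norm; [exact hs | apply J_member, hm | exact hup].
Qed.

(** Differences [e_a - e_b] are used because [J e_a] need not be small on a head of
    coordinates, whereas [J e_a - J e_b] is, for suitable [a < b]. *)
Lemma gliding_hump_step tau B H : 0 < tau ->
  exists a b h, (B <= a)%nat /\ (a < b)%nat /\ (H <= h)%nat /\
    forall K, psum s (off_block H h (J (unit_diff a b))) K <= tau.
Proof.
  intros htau.
  set (c := tau / (2 * (INR H + 1))).
  assert (hc : 0 < c) by (unfold c; apply Rdiv_lt_0_compat; [lra | pose proof (pos_INR H); lra]).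
  destruct (close_pair (fun n => J (unit_vec n)) M H (rpow c (/ s)) B (rpow_gt0 _ _ hc)
              J_unit_vec_bound) as [a [b [hBa [hab hclose]]]].
  set (w := J (unit_diff a b)).
  assert (hw : lp_member s w) by (apply J_member, unit_diff_member, hab).
  assert (hhead : psum s w H <= tau / 2).
  { apply Rle_trans with (INR H * c).
    - rewrite <- fsum_const. apply fsum_le. intros k hk.
      unfold w, unit_diff. rewrite J_vsub by apply unit_vec_member.
      rewrite <- (rpow_inv_r c s hs (Rlt_le _ _ hc)).
      apply rpow_le; [exact hs |]. split; [apply Cmod_ge0 | left; apply hclose, hk].
    - unfold c. pose proof (pos_INR H).
      apply Rmult_le_reg_r with (2 * (INR H + 1)); [lra |].
      replace (INR H * (tau / (2 * (INR H + 1))) * (2 * (INR H + 1))) with (INR H * tau)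
        by (field; lra).
      nra. }
  destruct (lp_sum_approx s w (tau / 2) hw ltac:(lra)) as [h0 hh0].
  exists a, b, (Nat.max h0 H). split; [exact hBa |]. split; [exact hab |]. split; [lia |].
  intros K. eapply Rle_trans; [apply psum_off_block_le; [lia | exact hw] |].
  pose proof (psum_mono s w h0 (Nat.max h0 H) ltac:(lia)). fold w. lra.
Qed.

Lemma gliding_hump_sequence tau : 0 < tau ->
  exists (a b H : nat -> nat),
    (forall i, (a i < b i)%nat /\ (b i < a (S i))%nat) /\
    (forall i, (H i <= H (S i))%nat) /\
    (forall i K, psum s (off_block (H i) (H (S i)) (J (unit_diff (a i) (b i)))) K <= tau).
Proof.
  intros htau.
  set (P := fun (BH : nat * nat) (t : nat * nat * nat) =>
    (fst BH <= fst (fst t))%nat /\ (fst (fst t) < snd (fst t))%nat /\ (snd BH <= snd t)%nat /\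
    forall K, psum s (off_block (snd BH) (snd t) (J (unit_diff (fst (fst t)) (snd (fst t))))) K
              <= tau).
  assert (step : forall BH, {t | P BH t}).
  { intros [B H]. apply constructive_indefinite_description.
    destruct (gliding_hump_step tau B H htau) as [a [b [h hP]]]. exists (a, b, h). exact hP. }
  (* state i = (lower bound for a i, start of block i) *)
  set (state := fix state (i : nat) : nat * nat :=
         match i with
         | O => (0, 0)%nat
         | S i => let t := proj1_sig (step (state i)) in (S (snd (fst t)), snd t)
         end).
  set (t i := proj1_sig (step (state i))).
  assert (ht : forall i, P (state i) (t i)) by (intros; apply proj2_sig).
  exists (fun i => fst (fst (t i))), (fun i => snd (fst (t i))), (fun i => snd (state i)).
  split; [| split]; intros i; destruct (ht i) as [h1 [h2 [h3 h4]]].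
  - destruct (ht (S i)) as [h1' _]. split; [exact h2 |]. simpl in h1'.
    change (proj1_sig (step (state i))) with (t i) in h1'. lia.
  - exact h3.
  - exact h4.
Qed.

Lemma lp_embedding_growth : exists A B, 0 < A /\ forall N : nat,
  exists x, lp_member r x /\ lp_sum r x = 2 * INR N /\
    A * INR N <= lp_sum s (J x) <= B * INR N.
Proof.
  set (Q := qconst s). assert (hQ : 1 <= Q) by (apply qconst_ge1, hs).
  pose proof alpha_pos as halpha.
  exists (alpha / (2 * Q)), (Q * beta + alpha / 4). split; [apply Rdiv_lt_0_compat; lra |].
  intros N. set (P := Q ^ N). assert (hP : 1 <= P) by (apply pow_R1_Rle; lra).
  (* tau is chosen so that the accumulated off-block error Q * Q^N * N * tau is N * alpha / 4 *)
  set (tau := alpha / (4 * Q * P)).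
  assert (htau : 0 < tau) by (apply Rdiv_lt_0_compat; nra).
  assert (hQPtau : Q * P * tau = alpha / 4) by (unfold tau; field; nra).
  destruct (gliding_hump_sequence tau htau) as [a [b [Hs [hab [hH hoff]]]]].
  set (w i := J (unit_diff (a i) (b i))).
  assert (hwm : forall i, lp_member s (w i)) by (intros; apply J_member, unit_diff_member, hab).
  assert (hws : forall i, alpha <= lp_sum s (w i) <= beta) by (intros; apply J_unit_diff_size, hab).
  destruct (lp_sum_vsum_unit_diff a b hab r N) as [hx hxsum].
  assert (hJx : J (vsum (fun i => unit_diff (a i) (b i)) N) = vsum w N).
  { apply J_vsum; [intros j; apply (lp_sum_vsum_unit_diff a b hab r j) |].
    intros i; apply unit_diff_member, hab. }
  assert (hW : lp_member s (vsum w N)) by (rewrite <- hJx; apply J_member, hx).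
  pose proof (lp_sum_vsum_lower s tau w Hs hs hH hoff N alpha beta hwm hws hW) as hlow.
  pose proof (lp_sum_vsum_upper s tau w Hs hs hH hoff N alpha beta hwm hws hW) as hup.
  change (qconst s) with Q in hlow, hup. change (Q ^ N) with P in hlow, hup.
  exists (vsum (fun i => unit_diff (a i) (b i)) N). split; [exact hx |]. split; [exact hxsum |].
  rewrite hJx. set (W := lp_sum s (vsum w N)) in *. pose proof (pos_INR N).
  assert (hNtau : Q * (P * (INR N * tau)) = INR N * (alpha / 4))
    by (rewrite <- hQPtau; ring).
  split.
  - apply Rmult_le_reg_l with (2 * Q); [lra |].
    replace (2 * Q * (alpha / (2 * Q) * INR N)) with (INR N * alpha) by (field; lra).
    assert (hQP : 1 <= Q * P) by nra.
    assert (tau <= alpha / 4) by (rewrite <- hQPtau; nra).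
    nra.
  - nra.
Qed.

Lemma Rle_div_of_mult_le c1 c2 X Y : 0 < c1 -> c1 * X <= c2 * Y -> X <= (c2 / c1) * Y.
Proof.
  intros h hle. apply Rmult_le_reg_l with c1; [exact h |].
  replace (c1 * (c2 / c1 * Y)) with (c2 * Y) by (field; lra). exact hle.
Qed.

Theorem lp_embedding_exponent_eq : r = s.
Proof.
  destruct lp_embedding_growth as [A [B [hA hgrowth]]].
  pose proof (emb_pos _ _ _ _ _ hJ) as hm.
  pose proof (rpow_gt0 2 (/ r) ltac:(lra)) as h2.
  assert (hrs : forall N : nat, (1 <= N)%nat ->
    rpow (INR N) (/ s) <= (M * rpow 2 (/ r) / rpow A (/ s)) * rpow (INR N) (/ r) /\
    rpow (INR N) (/ r) <= (rpow B (/ s) / (m * rpow 2 (/ r))) * rpow (INR N) (/ s)).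
  { intros N hN. assert (hNpos : 0 < INR N) by (apply lt_0_INR; lia).
    destruct (hgrowth N) as [x [hx [hxsum [hlo hhi]]]].
    pose proof (emb_lower _ _ _ _ _ hJ _ hx) as hl. pose proof (emb_upper _ _ _ _ _ hJ _ hx) as hu.
    cbn [nnorm lp] in hl, hu. unfold lp_norm in hl, hu. rewrite hxsum in hl, hu.
    rewrite rpow_mult in hl, hu by lra.
    assert (hs' : 0 < / s) by (apply Rinv_0_lt_compat, hs).
    assert (hJlo : rpow A (/ s) * rpow (INR N) (/ s) <= rpow (lp_sum s (J x)) (/ s))
      by (rewrite <- rpow_mult by lra; apply rpow_le; nra).
    assert (hJhi : rpow (lp_sum s (J x)) (/ s) <= rpow B (/ s) * rpow (INR N) (/ s))
      by (rewrite <- rpow_mult by nra; apply rpow_le; nra).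
    pose proof (rpow_gt0 A (/ s) hA).
    split; apply Rle_div_of_mult_le; nra. }
  assert (e : / r = / s).
  { apply Rle_antisym; eapply rpow_INR_exponent_le; intros N hN; apply (hrs N hN). }
  rewrite <- (Rinv_inv r), <- (Rinv_inv s), e. reflexivity.
Qed.

End LpEmbedding.

Lemma bscal_bzero (X : Banach) a : bscal X a (bzero X) = bzero X.
Proof.
  set (z := bscal X a (bzero X)).
  assert (hz : z = badd X z z) by (unfold z; rewrite <- bscal_addv, badd_zero; reflexivity).
  rewrite <- (badd_opp X z). rewrite hz at 2. rewrite <- badd_assoc, badd_opp, badd_zero.
  reflexivity.
Qed.

Lemma bnorm_bzero (X : Banach) : bnorm X (bzero X) = 0.
Proof. rewrite <- (bscal_bzero X C0), bnorm_scal, Cmod_C0. ring. Qed.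

Lemma le_sqrt_sum_sq a b : 0 <= a -> a <= sqrt (a ^ 2 + b ^ 2).
Proof.
  intros ha. rewrite <- (sqrt_pow2 a) at 1 by exact ha. apply sqrt_le_1_alt.
  pose proof (pow2_ge_0 b). lra.
Qed.

Lemma sqrt_sum_sq_0 a : 0 <= a -> sqrt (a ^ 2 + 0 ^ 2) = a.
Proof. intros ha. replace (a ^ 2 + 0 ^ 2) with (a ^ 2) by ring. apply sqrt_pow2, ha. Qed.

Lemma isomorphic_embedding_of_invertible (A C : NSpace) (B1 B2 : Banach) f :
  invertible_op (NSsum A (NS_of_Banach B1)) (NSsum C (NS_of_Banach B2)) f ->
  trivial_space B1 -> (forall x, 0 <= nnorm A x) -> (forall x, 0 <= nnorm C x) ->
  exists J m M, isomorphic_embedding C A J m M.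
Proof.
  intros [[fd [fa [fs [Mf hMf]]]] [g [[gd [ga [gs [Mg hMg]]]] [gf fg]]]] htriv hA hC.
  pose proof (Rmax_r Mf 1) as hMf1.
  exists (fun c => fst (g (c, bzero B2))), (/ Rmax Mf 1), (Rmax Mg 1). split.
  - intros c hc. apply (gd (c, bzero B2)). split; [exact hc | exact I].
  - intros c c' hc hc'. cbn [nadd NSsum NS_of_Banach].
    rewrite <- (badd_zero B2 (bzero B2)) at 1.
    change (fst (g (nadd (NSsum C (NS_of_Banach B2)) (c, bzero B2) (c', bzero B2)))
            = nadd A (fst (g (c, bzero B2))) (fst (g (c', bzero B2)))).
    rewrite ga by (split; [assumption | exact I]). reflexivity.
  - intros a c hc. cbn [nscal NSsum NS_of_Banach].
    rewrite <- (bscal_bzero B2 a) at 1.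
    change (fst (g (nscal (NSsum C (NS_of_Banach B2)) a (c, bzero B2)))
            = nscal A a (fst (g (c, bzero B2)))).
    rewrite gs by (split; [assumption | exact I]). reflexivity.
  - apply Rinv_0_lt_compat. lra.
  - intros c hc.
    (* since B1 = {0}, g (c, 0) = (J c, 0) and f maps it back to (c, 0) *)
    assert (e : g (c, bzero B2) = (fst (g (c, bzero B2)), bzero B1)).
    { destruct (g (c, bzero B2)) as [x y]. simpl. rewrite (htriv y). reflexivity. }
    pose proof (fg (c, bzero B2) (conj hc I)) as hfg. rewrite e in hfg.
    assert (hd : ndom (NSsum A (NS_of_Banach B1)) (fst (g (c, bzero B2)), bzero B1)).
    { split; [apply (gd (c, bzero B2)); split; [exact hc | exact I] | exact I]. }
    specialize (hMf _ hd). rewrite hfg in hMf. cbn [nnorm NSsum NS_of_Banach fst snd] in hMf.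
    rewrite !bnorm_bzero, !sqrt_sum_sq_0 in hMf by auto.
    apply Rmult_le_reg_l with (Rmax Mf 1); [lra |].
    rewrite <- Rmult_assoc, Rinv_r, Rmult_1_l by lra.
    eapply Rle_trans; [exact hMf |]. apply Rmult_le_compat_r; [apply hA | apply Rmax_l].
  - intros c hc. specialize (hMg (c, bzero B2) (conj hc I)).
    cbn [nnorm NSsum NS_of_Banach fst snd] in hMg.
    rewrite bnorm_bzero, sqrt_sum_sq_0 in hMg by apply hC.
    eapply Rle_trans; [apply le_sqrt_sum_sq, hA |]. eapply Rle_trans; [exact hMg |].
    apply Rmult_le_compat_r; [apply hC | apply Rmax_l].
Qed.

Theorem proposition4p3 (p q : R) (hp : 1 <= p) (hq : 1 <= q) (hpq : p <> q)
  (T : ncar (lp p) -> ncar (lp p)) (S : ncar (lp q) -> ncar (lp q))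
  (hT : bounded_op (lp p) (lp p) T) (hS : bounded_op (lp q) (lp q) S) :
  ~ equiv_after_one_sided_ext (lp p) (lp q) T S.
Proof.
  assert (hnorm : forall r x, 0 <= nnorm (lp r) x) by (intros; apply rpow_nonneg).
  intros [X' [Y' [[hX | hY] [E [F [hE [hF _]]]]]]]; apply hpq.
  - destruct (isomorphic_embedding_of_invertible (lp p) (lp q) X' Y' F hF hX
                (hnorm p) (hnorm q)) as [J [m [M hJ]]].
    symmetry. apply (lp_embedding_exponent_eq q p m M J); [lra | exact hJ].
  - destruct (isomorphic_embedding_of_invertible (lp q) (lp p) Y' X' E hE hY
                (hnorm q) (hnorm p)) as [J [m [M hJ]]].
    apply (lp_embedding_exponent_eq p q m M J); [lra | exact hJ].
Qed.
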